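(* Let $c_1,c_2$ be arbitrary real constants and $\varepsilon,\delta\in\{1,-1\}$. Each of the following functions is an exact solution of the equation $u_t+(u_x+u_{xx})^2=0$ on $\mathbb{R}^2$: (1) $u=c_1+c_2e^{-x}$; (2) $u=c_1-\varepsilon(x+\varepsilon t)+4\delta c_2e^{-\frac12(x+\varepsilon t)}+\varepsilon c_2^2e^{-(x+\varepsilon t)}$; (3) $u=c_1+4\delta e^{-\frac x2}-(t+c_2)e^{-x}$; (4) $u=c_1+c_2e^{-x}+\delta x-t$; (5) $u=c_1+\varepsilon t+\frac{1}{2k}\left(\delta\sqrt{1-4\varepsilon k^2}-1\right)\left(x+\frac1k t\right)$, where $k\neq 0$ if $\varepsilon=-1$, and $0<|k|\le\frac12$ if $\varepsilon=1$. *)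

From Stdlib Require Export Reals.
From Coquelicot Require Export Coquelicot.
Open Scope R_scope.

Definition is_solution (u : R -> R -> R) : Prop :=
  forall x t : R,
    ex_derive (fun s => u x s) t /\
    ex_derive (fun y => u y t) x /\
    ex_derive (fun y => Derive (fun z => u z t) y) x /\
    Derive (fun s => u x s) t
      + (Derive (fun y => u y t) x
         + Derive (fun y => Derive (fun z => u z t) y) x) ^ 2 = 0.

(* The
   exponential families rest on the identity (e^(-z/2))^2 = e^(-z), which makes
   (u_x + u_xx)^2 collapse onto -u_t; the linear family reduces to choosing the
   slope as a root of the quadratic k b^2 + b + eps k = 0. *)
From Stdlib Require Import Lra FunctionalExtensionality.

Lemma is_solution_intro (u ut ux uxx : R -> R -> R) :
  (forall x t, is_derive (fun s => u x s) t (ut x t)) ->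
  (forall x t, is_derive (fun y => u y t) x (ux x t)) ->
  (forall x t, is_derive (fun y => ux y t) x (uxx x t)) ->
  (forall x t, ut x t + (ux x t + uxx x t) ^ 2 = 0) ->
  is_solution u.
Proof.
  intros Hut Hux Huxx Hpde x t.
  assert (Dux : forall y, Derive (fun z => u z t) y = ux y t)
    by (intro y; apply is_derive_unique, Hux).
  assert (Duxx : Derive (fun y => Derive (fun z => u z t) y) x = uxx x t).
  { rewrite <- (is_derive_unique _ _ _ (Huxx x t)). apply Derive_ext, Dux. }
  repeat split.
  - eexists; apply Hut.
  - eexists; apply Hux.
  - apply (ex_derive_ext (fun y => ux y t)); [intro y; symmetry; apply Dux|].
    eexists; apply Huxx.
  - rewrite Duxx, Dux.
    replace (Derive (fun s => u x s) t) with (ut x t)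
      by (symmetry; apply is_derive_unique, Hut).
    apply Hpde.
Qed.

Lemma is_solution_ext (u v : R -> R -> R) :
  is_solution u -> (forall x t, u x t = v x t) -> is_solution v.
Proof.
  intros Hu Euv; replace v with u; [exact Hu|].
  apply functional_extensionality; intro x.
  apply functional_extensionality; intro t. apply Euv.
Qed.

Lemma exp_sq (a b : R) : 2 * a = b -> exp a ^ 2 = exp b.
Proof. intros <-; simpl; rewrite Rmult_1_r, <- exp_plus; f_equal; ring. Qed.

Lemma linear_solution (c a b : R) :
  a + b ^ 2 = 0 -> is_solution (fun x t => c + a * t + b * x).
Proof.
  intro Hab.
  apply (is_solution_intro _ (fun _ _ => a) (fun _ _ => b) (fun _ _ => 0));
    try (intros; auto_derive; auto; ring).
  intros; rewrite Rplus_0_r; exact Hab.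
Qed.

Lemma exp_linear_solution (c1 c2 b : R) :
  is_solution (fun x t => c1 + c2 * exp (- x) + b * x - b ^ 2 * t).
Proof.
  apply (is_solution_intro _ (fun _ _ => - b ^ 2)
           (fun x _ => - c2 * exp (- x) + b) (fun x _ => c2 * exp (- x)));
    try (intros; auto_derive; auto; ring).
  intros; ring.
Qed.

(* With z = x + eps t one has u_x + u_xx = -(eps + delta c2 e^(-z/2)). *)
Lemma travelling_exp_solution (c1 c2 eps delta : R) :
  delta ^ 2 = eps ^ 2 ->
  is_solution (fun x t =>
    c1 - eps * (x + eps * t)
    + 4 * delta * c2 * exp (- (1/2) * (x + eps * t))
    + eps * c2 ^ 2 * exp (- (x + eps * t))).
Proof.
  intro Hde.
  set (E z := exp (- (1/2) * z)).
  set (ux x t := - eps - 2 * delta * c2 * E (x + eps * t)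
                 - eps * c2 ^ 2 * exp (- (x + eps * t))).
  apply (is_solution_intro _ (fun x t => eps * ux x t) ux
           (fun x t => delta * c2 * E (x + eps * t)
                       + eps * c2 ^ 2 * exp (- (x + eps * t))));
    unfold ux, E; try (intros; auto_derive; auto; field).
  intros x t.
  rewrite <- (exp_sq (- (1/2) * (x + eps * t)) (- (x + eps * t))) by field.
  ring_simplify. rewrite Hde. ring.
Qed.

(* Here u_x + u_xx = - delta e^(-x/2). *)
Lemma exp_half_solution (c1 c2 delta : R) :
  delta ^ 2 = 1 ->
  is_solution (fun x t => c1 + 4 * delta * exp (- (x / 2)) - (t + c2) * exp (- x)).
Proof.
  intro Hd.
  apply (is_solution_intro _ (fun x _ => - exp (- x))
           (fun x t => - 2 * delta * exp (- (x / 2)) + (t + c2) * exp (- x))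
           (fun x t => delta * exp (- (x / 2)) - (t + c2) * exp (- x)));
    try (intros; auto_derive; auto; unfold Rdiv; field).
  intros x t.
  rewrite <- (exp_sq (- (x / 2)) (- x)) by field.
  ring_simplify. rewrite Hd. ring.
Qed.

Lemma quadratic_root (k e delta s : R) :
  k <> 0 -> delta ^ 2 = 1 -> s ^ 2 = 1 - 4 * e * k ^ 2 ->
  let b := 1 / (2 * k) * (delta * s - 1) in
  (e + b / k) + b ^ 2 = 0.
Proof.
  intros Hk Hd Hs b; unfold b.
  field_simplify; [|exact Hk].
  replace (delta ^ 2 * s ^ 2) with (s ^ 2) by (rewrite Hd; ring).
  rewrite Hs; field; exact Hk.
Qed.

Lemma discriminant_nonneg (eps k : R) :
  (eps = 1 \/ eps = -1) -> (eps = 1 -> Rabs k <= 1/2) ->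
  0 <= 1 - 4 * eps * k ^ 2.
Proof.
  intros [-> | ->] Hk.
  - specialize (Hk eq_refl).
    rewrite <- pow2_abs. pose proof (Rabs_pos k). nra.
  - pose proof (pow2_ge_0 k); lra.
Qed.

Theorem mainTheorem4 :
  forall (c1 c2 eps delta : R),
    (eps = 1 \/ eps = -1) -> (delta = 1 \/ delta = -1) ->
    is_solution (fun x t => c1 + c2 * exp (- x))
    /\ is_solution (fun x t =>
         c1 - eps * (x + eps * t)
         + 4 * delta * c2 * exp (- (1/2) * (x + eps * t))
         + eps * c2 ^ 2 * exp (- (x + eps * t)))
    /\ is_solution (fun x t =>
         c1 + 4 * delta * exp (- (x / 2)) - (t + c2) * exp (- x))
    /\ is_solution (fun x t => c1 + c2 * exp (- x) + delta * x - t)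
    /\ (forall k : R,
          (eps = -1 -> k <> 0) ->
          (eps = 1 -> 0 < Rabs k <= 1/2) ->
          is_solution (fun x t =>
            c1 + eps * t
            + 1 / (2 * k) * (delta * sqrt (1 - 4 * eps * k ^ 2) - 1)
              * (x + 1 / k * t))).
Proof.
  intros c1 c2 eps delta He Hd.
  assert (Hd2 : delta ^ 2 = 1) by (destruct Hd as [-> | ->]; ring).
  assert (He2 : eps ^ 2 = 1) by (destruct He as [-> | ->]; ring).
  split; [|split; [|split; [|split]]].
  - apply (is_solution_ext _ _ (exp_linear_solution c1 c2 0)); intros; ring.
  - apply travelling_exp_solution; congruence.
  - now apply exp_half_solution.
  - apply (is_solution_ext _ _ (exp_linear_solution c1 c2 delta)).
    intros; rewrite Hd2; ring.
  - intros k Hk1 Hk2.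
    assert (Hk : k <> 0).
    { destruct He as [E | E]; [|now apply Hk1].
      destruct (Hk2 E) as [Hpos _]; intros ->; rewrite Rabs_R0 in Hpos; lra. }
    set (s := sqrt (1 - 4 * eps * k ^ 2)).
    assert (Hs : s ^ 2 = 1 - 4 * eps * k ^ 2).
    { rewrite <- Rsqr_pow2; apply Rsqr_sqrt, discriminant_nonneg; [exact He|].
      intro E; apply Hk2, E. }
    set (b := 1 / (2 * k) * (delta * s - 1)).
    apply (is_solution_ext _ _
             (linear_solution c1 (eps + b / k) b (quadratic_root k eps delta s Hk Hd2 Hs))).
    intros; unfold b; field; exact Hk.
Qed.
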